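(* For every value profile $(v_1,v_2)\in\mathbb R^2_{\ge0}$, the allocation $x=x(v_1,v_2)$ of the two-bidder auction defined below satisfies $\bar W(x)\ge\frac34\bar W^*$.
   Context: One divisible good, two bidders with values per unit $v_1,v_2\ge0$ and known budgets $B_1=B_2=1$. The allocation $x(v_1,v_2)=(x_1,x_2)$ is symmetric ($x(v_1,v_2)$ is obtained from $x(v_2,v_1)$ by swapping coordinates) and for $v_1\ge v_2$ is given by the first applicable rule: if $v_1=v_2$, $x=(\frac12,\frac12)$; else if $v_2\le\frac13$, $x=(1,0)$; else if $\frac13\le v_2\le1$, $x=(\frac14+\frac1{4v_2},\frac34-\frac1{4v_2})$; else ($v_2\ge1$) $x=(\frac12,\frac12)$. Liquid welfare: $\bar W(x)=\sum_i\min\{v_ix_i,B_i\}$; $\bar W^*=\max\{\bar W(x):x\ge0,x_1+x_2=1\}$. *)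

From Stdlib Require Import Reals Lra.
Open Scope R_scope.

Definition alloc_hi (v1 v2 : R) : R * R :=
  if Req_EM_T v1 v2 then (1/2, 1/2)
  else if Rle_dec v2 (1/3) then (1, 0)
  else if Rle_dec v2 1 then (1/4 + 1/(4*v2), 3/4 - 1/(4*v2))
  else (1/2, 1/2).

Definition alloc (v1 v2 : R) : R * R :=
  if Rle_dec v2 v1 then alloc_hi v1 v2
  else let p := alloc_hi v2 v1 in (snd p, fst p).

Definition B1 : R := 1.
Definition B2 : R := 1.

Definition liquid_welfare (v1 v2 : R) (x : R * R) : R :=
  Rmin (v1 * fst x) B1 + Rmin (v2 * snd x) B2.

Definition feasible (x : R * R) : Prop :=
  0 <= fst x /\ 0 <= snd x /\ fst x + snd x = 1.

Definition is_optimal_LW (v1 v2 w : R) : Prop :=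
  (exists y, feasible y /\ liquid_welfare v1 v2 y = w) /\
  (forall y, feasible y -> liquid_welfare v1 v2 y <= w).

From Pilot Require Import Defs.
From Stdlib Require Import Reals Lra Psatz.
Open Scope R_scope.

(* Both the allocation rule and the liquid welfare are symmetric
   under swapping the two bidders, so it suffices to treat v1 >= v2 >= 0.
   In that case every feasible allocation y has welfare L = W(y) satisfying
   three "budget bounds":  L <= v1,  L <= 2  and, when v1 >= 1,
   v1 * L <= v1 + v2 * (v1 - 1)   (bidder 1 is capped once y1 >= 1/v1).
   (1) The allocation (1,0) if v1 <= 1, and (1/v1, 1 - 1/v1) otherwise,
       attains every number obeying these bounds, so W* exists.
   (2) For each branch of the allocation rule, its welfare is at least 3/4
       of any number obeying the bounds; the only delicate branch is
       1/3 < v2 <= 1, which reduces to the quadratic inequality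
       v1^2 (v2 + 1) - 4 v1 v2 + 3 v2^2 >= 0, valid because v2 >= 1/3.
   The theorem follows by combining (1) and (2) and undoing the symmetry. *)

Ltac split_Rmin :=
  unfold Rmin; repeat match goal with
                      | |- context [Rle_dec ?a ?b] => destruct (Rle_dec a b)
                      end.

Lemma liquid_welfare_swap v1 v2 x :
  liquid_welfare v1 v2 (snd x, fst x) = liquid_welfare v2 v1 x.
Proof. unfold liquid_welfare; simpl; apply Rplus_comm. Qed.

Lemma feasible_swap x : feasible x -> feasible (snd x, fst x).
Proof. unfold feasible; simpl; lra. Qed.

(* The discriminant 4 v2^2 (1 - 3 v2) of this quadratic in v1 is nonpositive
   when v2 >= 1/3; this is the heart of the middle branch of the rule. *)
Lemma middle_quadratic_nonneg v1 v2 :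
  1/3 <= v2 -> 0 <= v1 * v1 * (v2 + 1) - 4 * v1 * v2 + 3 * v2 * v2.
Proof.
  intros Hv2.
  assert (Hsq : (v2 + 1) * (v1 * v1 * (v2 + 1) - 4 * v1 * v2 + 3 * v2 * v2)
                = ((v2 + 1) * v1 - 2 * v2) ^ 2 + v2 * v2 * (3 * v2 - 1)) by ring.
  assert (0 <= v2 * v2 * (3 * v2 - 1)) by (apply Rmult_le_pos; nra).
  pose proof (pow2_ge_0 ((v2 + 1) * v1 - 2 * v2)).
  nra.
Qed.

Section OrderedValues.

Variables v1 v2 : R.
Hypothesis v2_nonneg : 0 <= v2.
Hypothesis v2_le_v1 : v2 <= v1.

Definition budget_bounds (L : R) : Prop :=
  L <= v1 /\ L <= 2 /\ (1 <= v1 -> v1 * L <= v1 + v2 * (v1 - 1)).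

Lemma feasible_budget_bounds y :
  feasible y -> budget_bounds (liquid_welfare v1 v2 y).
Proof.
  destruct y as [y1 y2]; unfold feasible, budget_bounds, liquid_welfare, Defs.B1, Defs.B2;
    simpl; intros (Hy1 & Hy2 & Hsum).
  repeat split; [split_Rmin; nra | split_Rmin; lra |].
  intros Hv1.
  assert (Hinv : v1 * / v1 = 1) by (field; lra).
  assert (0 < / v1) by (apply Rinv_0_lt_compat; lra).
  split_Rmin; destruct (Rle_dec y1 (/ v1)); nra.
Qed.

Definition optimal_alloc : R * R :=
  if Rle_dec v1 1 then (1, 0) else (/ v1, 1 - / v1).

Lemma optimal_alloc_feasible : feasible optimal_alloc.
Proof.
  unfold optimal_alloc, feasible; destruct (Rle_dec v1 1); simpl; [lra |].
  assert (v1 * / v1 = 1) by (field; lra).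
  assert (0 < / v1) by (apply Rinv_0_lt_compat; lra).
  nra.
Qed.

Lemma budget_bounds_le_optimal L :
  budget_bounds L -> L <= liquid_welfare v1 v2 optimal_alloc.
Proof.
  intros (HL1 & HL2 & HL3); unfold optimal_alloc, liquid_welfare, Defs.B1, Defs.B2.
  destruct (Rle_dec v1 1); simpl; split_Rmin; try lra.
  all: assert (v1 * / v1 = 1) by (field; lra).
  all: assert (0 < / v1) by (apply Rinv_0_lt_compat; lra).
  all: specialize (HL3 ltac:(lra)); nra.
Qed.

Lemma even_split_bound L :
  v1 = v2 \/ 1 < v2 -> budget_bounds L ->
  liquid_welfare v1 v2 (1/2, 1/2) >= 3/4 * L.
Proof.
  intros Hcase (HL1 & HL2 & HL3); unfold liquid_welfare, Defs.B1, Defs.B2; simpl.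
  destruct (Rle_dec 1 v1) as [Hv1 | Hv1]; [specialize (HL3 Hv1) |].
  all: destruct Hcase; [subst |]; split_Rmin; nra.
Qed.

Lemma winner_takes_all_bound L :
  v2 <= 1/3 -> budget_bounds L ->
  liquid_welfare v1 v2 (1, 0) >= 3/4 * L.
Proof.
  intros Hv2 (HL1 & HL2 & HL3); unfold liquid_welfare, Defs.B1, Defs.B2; simpl.
  destruct (Rle_dec 1 v1) as [Hv1 | Hv1]; [specialize (HL3 Hv1) |];
    split_Rmin; nra.
Qed.

Lemma middle_split_bound L :
  1/3 < v2 -> v2 <= 1 -> budget_bounds L ->
  liquid_welfare v1 v2 (1/4 + 1/(4*v2), 3/4 - 1/(4*v2)) >= 3/4 * L.
Proof.
  intros Hlo Hhi (HL1 & HL2 & HL3); unfold liquid_welfare, Defs.B1, Defs.B2; simpl.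
  (* Bidder 2 receives value (3 v2 - 1)/4 <= 1/2, below its budget. *)
  replace (v2 * (3/4 - 1/(4*v2))) with ((3 * v2 - 1) / 4) by (field; lra).
  assert (Hx1 : 4 * v2 * (1/4 + 1/(4*v2)) = v2 + 1) by (field; lra).
  set (x1 := 1/4 + 1/(4*v2)) in *; clearbody x1.
  pose proof (middle_quadratic_nonneg v1 v2 ltac:(lra)) as Hquad.
  (* Uncapped bidder 1 with v1 >= 1: 4 v2 (v1^2 x1 - v1 + 3 v2 / 4) is the
     quadratic above, which yields the bound after multiplying by v1. *)
  assert (Hkey_identity : 4 * v2 * (v1 * v1 * x1 - v1 + 3/4 * v2)
                 = v1 * v1 * (v2 + 1) - 4 * v1 * v2 + 3 * v2 * v2).
  { replace (v1 * v1 * (v2 + 1)) with (v1 * v1 * (4 * v2 * x1)) by (rewrite Hx1; ring).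
    field. }
  assert (Huncapped_gain : 0 <= v1 * v1 * x1 - v1 + 3/4 * v2) by nra.
  destruct (Rle_dec 1 v1) as [Hv1 | Hv1]; [specialize (HL3 Hv1) |];
    split_Rmin; nra.
Qed.

Lemma alloc_hi_bound L :
  budget_bounds L -> liquid_welfare v1 v2 (alloc_hi v1 v2) >= 3/4 * L.
Proof.
  intros HL; unfold alloc_hi.
  destruct (Req_EM_T v1 v2); [apply even_split_bound; auto |].
  destruct (Rle_dec v2 (1/3)); [apply winner_takes_all_bound; auto |].
  destruct (Rle_dec v2 1); [apply middle_split_bound; auto; lra |].
  apply even_split_bound; auto; lra.
Qed.

End OrderedValues.

Lemma exists_optimal_alloc v1 v2 :
  0 <= v1 -> 0 <= v2 -> exists ys, feasible ys /\
    forall y, feasible y -> liquid_welfare v1 v2 y <= liquid_welfare v1 v2 ys.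
Proof.
  intros H1 H2; destruct (Rle_dec v2 v1).
  - exists (optimal_alloc v1); split; [apply optimal_alloc_feasible |].
    intros y Hy; apply budget_bounds_le_optimal; auto.
    apply feasible_budget_bounds; auto.
  - set (ys := optimal_alloc v2).
    exists (snd ys, fst ys); split; [apply feasible_swap, optimal_alloc_feasible |].
    intros y Hy; rewrite liquid_welfare_swap, <- (liquid_welfare_swap v2 v1 y).
    apply budget_bounds_le_optimal; [lra |].
    apply feasible_budget_bounds; [lra | lra | apply feasible_swap; auto].
Qed.

Lemma alloc_bound v1 v2 y :
  0 <= v1 -> 0 <= v2 -> feasible y ->
  liquid_welfare v1 v2 (alloc v1 v2) >= 3/4 * liquid_welfare v1 v2 y.
Proof.
  intros H1 H2 Hy; unfold alloc; destruct (Rle_dec v2 v1).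
  - apply alloc_hi_bound, feasible_budget_bounds; auto.
  - rewrite liquid_welfare_swap, <- (liquid_welfare_swap v2 v1 y).
    apply alloc_hi_bound, feasible_budget_bounds; [lra | lra | lra | lra |].
    apply feasible_swap; auto.
Qed.

Theorem mainTheorem12 :
  forall v1 v2 : R, 0 <= v1 -> 0 <= v2 ->
    (exists Wstar, is_optimal_LW v1 v2 Wstar) /\
    (forall Wstar, is_optimal_LW v1 v2 Wstar ->
       liquid_welfare v1 v2 (alloc v1 v2) >= 3/4 * Wstar).
Proof.
  intros v1 v2 H1 H2; split.
  - destruct (exists_optimal_alloc v1 v2 H1 H2) as [ys [Hys Hmax]].
    exists (liquid_welfare v1 v2 ys); split; [exists ys; auto | exact Hmax].
  - intros W [[y [Hy <-]] _]; apply alloc_bound; auto.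
Qed.
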